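(* Let $\mathcal{U}$ be a Banach space, $\mathcal{W},\mathcal{Y}$ reflexive Banach spaces, $\mathcal{G}$ a Hilbert space, $A\in L(\mathcal{Y},\mathcal{W}^* )$ continuously invertible, $B\in L(\mathcal{U},\mathcal{W}^* )$, $C\in L(\mathcal{Y},\mathcal{G})$, and $K:=CA^{-1}B\in L(\mathcal{U},\mathcal{G})$. Let $\{\mathcal{R}_\alpha\}_{\alpha>0}$ be a family of proper, convex, lower semicontinuous functionals $\mathcal{R}_\alpha:\mathcal{U}\to\mathbb{R}\cup\{+\infty\}$, and set $J_\alpha(u,y):=\frac12\|Cy-g^\delta\|_\mathcal{G}^2+\mathcal{R}_\alpha(u)$. Let $\mathcal{U}_h\subset\mathcal{U}$, $\mathcal{Y}_h\subset\mathcal{Y}$, $\mathcal{W}_h\subset\mathcal{W}$ be finite-dimensional subspaces. Let $g^\dagger\in\mathcal{G}$ and, for $\delta>0$, let $g^\delta\in\mathcal{G}$ satisfy $\|g^\dagger-g^\delta\|_\mathcal{G}\le\delta$. For $\alpha>0$, let $(u_\alpha^\delta,y_\alpha^\delta)$ be a minimizer of $J_\alpha(u,y)$ over $u\in\mathcal{U}$, $y\in\mathcal{Y}$ subject to $Ay=Bu$ in $\mathcal{W}^*$, and let $(u_{\alpha,h}^\delta,y_{\alpha,h}^\delta)$ be a minimizer of $J_\alpha(u,y)$ over $u\in\mathcal{U}_h$, $y\in\mathcal{Y}_h$ subject to $\langle Ay-Bu,w_h\rangle_{\mathcal{W}^*,\mathcal{W}}=0$ for all $w_h\in\mathcal{W}_h$.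 Let $c_1,c_2,\overline{\tau},\underline{\tau}>0$ be constants independent of $\delta$ with $\overline{\tau}>\underline{\tau}\ge\max\{\sqrt{1+2c_2},\,1+c_1\}$, and let $\alpha(\delta)>0$ be chosen such that $$\underline{\tau}\delta\le\|Cy_{\alpha(\delta),h}^\delta-g^\delta\|_\mathcal{G}\le\overline{\tau}\delta,$$ $$\Big|\|Cy_{\alpha(\delta),h}^\delta-g^\delta\|_\mathcal{G}-\|Cy_{\alpha(\delta)}^\delta-g^\delta\|_\mathcal{G}\Big|\le c_1\delta,$$ $$J_{\alpha(\delta)}(u_{\alpha(\delta),h}^\delta,y_{\alpha(\delta),h}^\delta)-J_{\alpha(\delta)}(u_{\alpha(\delta)}^\delta,y_{\alpha(\delta)}^\delta)\le c_2\delta^2.$$ Then for any solution $u^\dagger\in\mathcal{U}$ of $Ku=g^\dagger$, $$\mathcal{R}_{\alpha(\delta)}(u_{\alpha(\delta)}^\delta)\le\mathcal{R}_{\alpha(\delta)}(u^\dagger)\quad\text{and}\quad\mathcal{R}_{\alpha(\delta)}(u_{\alpha(\delta),h}^\delta)\le\mathcal{R}_{\alpha(\delta)}(u^\dagger)\quad\text{for all }\delta>0,$$ and moreover $$\|Cy_{\alpha(\delta),h}^\delta-g^\delta\|_\mathcal{G}\le\overline{\tau}\delta\to0\quad\text{and}\quad\|Cy_{\alpha(\delta)}^\delta-g^\delta\|_\mathcal{G}\le(\overline{\tau}+c_1)\delta\to0\quad(\delta\to0).$$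
   Context: Minimizers of the continuous and discrete problems are assumed to exist for all $\alpha,\delta$ considered. *)

From HB Require Import structures.
From mathcomp Require Import all_boot all_order all_algebra.
From mathcomp Require Import all_classical all_reals all_analysis.
Set Implicit Arguments. Unset Strict Implicit. Unset Printing Implicit Defensive.
Import Order.TTheory GRing.Theory Num.Theory.
Import numFieldNormedType.Exports.
Local Open Scope classical_set_scope.
Local Open Scope ring_scope.

Section Defs.
Context {R : realType}.

(* Bounded linear functionals on a normed space W: the dual space W^*,
   viewed as a set of functions W -> R. *)
Definition bdd_lin_functional (W : normedModType R) (f : W -> R) : Prop :=
  (forall (a b : R) (v w : W), f (a *: v + b *: w) = a * f v + b * f w) /\
  exists M : R, forall w : W, `|f w| <= M * `|w|.

Definition dual_norm (W : normedModType R) (f : W -> R) : R :=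
  sup [set `|f w| | w in [set w : W | `|w| <= 1]].

(* Reflexivity: the canonical embedding W -> W^** is surjective, i.e. every
   bounded linear functional on W^* (with the dual norm) is evaluation at
   some w in W. *)
Definition reflexive_space (W : normedModType R) : Prop :=
  forall phi : (W -> R) -> R,
    (forall (a b : R) (f g : W -> R), bdd_lin_functional f -> bdd_lin_functional g ->
       phi (fun w => a * f w + b * g w) = a * phi f + b * phi g) ->
    (exists M : R, forall f : W -> R, bdd_lin_functional f -> `|phi f| <= M * dual_norm f) ->
    exists w : W, forall f : W -> R, bdd_lin_functional f -> phi f = f w.

(* A bounded linear operator Y -> W^*, represented as A : Y -> W -> R
   (A y is the functional (A y) in W^*, and A y w = <A y, w>_{W^*,W}. *)
Definition bdd_op_to_dual (Y W : normedModType R) (A : Y -> W -> R) : Prop :=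
  (forall y, bdd_lin_functional (A y)) /\
  (forall (a b : R) (y1 y2 : Y) (w : W),
      A (a *: y1 + b *: y2) w = a * A y1 w + b * A y2 w) /\
  exists M : R, forall y, dual_norm (A y) <= M * `|y|.

Definition cont_invertible_to_dual (Y W : normedModType R) (A : Y -> W -> R) : Prop :=
  (forall f : W -> R, bdd_lin_functional f -> exists y, A y = f) /\
  (forall y1 y2, A y1 = A y2 -> y1 = y2) /\
  exists c : R, forall y, `|y| <= c * dual_norm (A y).

Definition bdd_linear (V G : normedModType R) (C : V -> G) : Prop :=
  (forall (a b : R) (v w : V), C (a *: v + b *: w) = a *: C v + b *: C w) /\
  exists M : R, forall v, `|C v| <= M * `|v|.

(* ip is an inner product on G inducing its norm (so a complete G is a
   (real) Hilbert space). *)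
Definition inner_product_of_norm (G : normedModType R) (ip : G -> G -> R) : Prop :=
  (forall (a b : R) (x y z : G), ip (a *: x + b *: y) z = a * ip x z + b * ip y z) /\
  (forall x y, ip x y = ip y x) /\
  (forall x, ip x x = `|x| ^+ 2).

Definition findim_subspace (V : lmodType R) (S : set V) : Prop :=
  exists (n : nat) (e : 'I_n -> V),
    S = range (fun c : 'I_n -> R => \sum_(i < n) c i *: e i).

Definition proper_fun (U : Type) (F : U -> \bar R) : Prop :=
  (forall u, F u != -oo%E) /\ exists u, F u != +oo%E.

Definition convex_fun (U : lmodType R) (F : U -> \bar R) : Prop :=
  forall (t : R) (u v : U), 0 < t < 1 ->
    (F (t *: u + (1 - t) *: v)%R <= t%:E * F u + (1 - t)%:E * F v)%E.

Definition Jfun (U Y G : normedModType R) (C : Y -> G) (Ralpha : U -> \bar R)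
  (g : G) (u : U) (y : Y) : \bar R :=
  ((2^-1 * `|C y - g| ^+ 2)%:E + Ralpha u)%E.

Definition cont_feasible (U Y W : normedModType R) (A : Y -> W -> R)
  (B : U -> W -> R) (u : U) (y : Y) : Prop := A y = B u.

Definition disc_feasible (U Y W : normedModType R) (A : Y -> W -> R)
  (B : U -> W -> R) (Uh : set U) (Yh : set Y) (Wh : set W) (u : U) (y : Y) : Prop :=
  Uh u /\ Yh y /\ forall w, Wh w -> A y w - B u w = 0.

Definition is_minimizer (U Y : Type) (J : U -> Y -> \bar R) (P : U -> Y -> Prop)
  (u0 : U) (y0 : Y) : Prop :=
  P u0 y0 /\ forall u y, P u y -> (J u0 y0 <= J u y)%E.

End Defs.

From HB Require Import structures.
From mathcomp Require Import all_boot all_order all_algebra.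
From mathcomp Require Import all_classical all_reals all_analysis.
From mathcomp Require Import lra.
Set Implicit Arguments. Unset Strict Implicit. Unset Printing Implicit Defensive.
Import Order.TTheory GRing.Theory Num.Theory.
Import numFieldNormedType.Exports.
Local Open Scope classical_set_scope.
Local Open Scope ring_scope.

(* Both minimizers are compared with the admissible pair (u^dag, y^dag), whose
   Tikhonov value is at most delta^2/2 + R(u^dag).  The lower discrepancy
   bounds force the fidelity term of the continuous minimizer to be at least
   delta^2/2 and that of the discrete one to be at least delta^2/2 + c2 delta^2,
   which absorbs the extra c2 delta^2 allowed by the J-gap condition; what is
   left is R(u) <= R(u^dag).  Only the minimality of the continuous pair is
   used: the discrete pair enters through the J-gap condition alone, and none
   of the structural hypotheses on the spaces, operators or R_alpha is needed.
   The residuals tend to 0 because the upper discrepancy bounds are linear in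
   delta. *)

Lemma half_sqr_add_le (R : realType) (e r d c : R) :
  0 <= c -> 0 <= e <= d -> Num.sqrt (1 + 2 * c) * d <= r ->
  2^-1 * e ^+ 2 + c * d ^+ 2 <= 2^-1 * r ^+ 2.
Proof.
move=> c_ge0 /andP[e_ge0 e_le_d] sqrt_le_r.
have d_ge0 : 0 <= d by exact: le_trans e_le_d.
have sqrt_ge0 := sqrtr_ge0 (1 + 2 * c).
have e2_le_d2 : e ^+ 2 <= d ^+ 2 by rewrite ler_sqr ?nnegrE.
have d2_le_r2 : (1 + 2 * c) * d ^+ 2 <= r ^+ 2.
  have -> : 1 + 2 * c = Num.sqrt (1 + 2 * c) ^+ 2 by rewrite sqr_sqrtr //; lra.
  rewrite -exprMn ler_sqr ?nnegrE ?mulr_ge0 //.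
  by apply: le_trans sqrt_le_r; rewrite mulr_ge0.
nra.
Qed.

Section TikhonovComparison.
Variables (R : realType) (U Y G : normedModType R).
Variables (C : Y -> G) (Rf : U -> \bar R) (g : G).

Lemma Jfun_le_regularizer (u u' : U) (y y' : Y) (c : R) :
  2^-1 * `|C y' - g| ^+ 2 + c <= 2^-1 * `|C y - g| ^+ 2 ->
  (Jfun C Rf g u y <= Jfun C Rf g u' y' + c%:E)%E -> (Rf u <= Rf u')%E.
Proof.
rewrite /Jfun => fidelity_le J_le.
rewrite -(@leeD2lE _ (2^-1 * `|C y' - g| ^+ 2 + c)%:E) //.
apply: le_trans (_ : (_ <= (2^-1 * `|C y - g| ^+ 2)%:E + Rf u)%E) _.
  by apply: leeD2r; rewrite lee_fin.
by apply: le_trans J_le _; rewrite EFinD addeAC -addeA.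
Qed.

Lemma regularizers_le_of_minimality (c2 d : R) (uc ud udag : U) (yc yd ydag : Y) :
  0 <= c2 -> `|C ydag - g| <= d -> d <= `|C yc - g| ->
  Num.sqrt (1 + 2 * c2) * d <= `|C yd - g| ->
  (Jfun C Rf g uc yc <= Jfun C Rf g udag ydag)%E ->
  (Jfun C Rf g ud yd - Jfun C Rf g uc yc <= (c2 * d ^+ 2)%:E)%E ->
  (Rf uc <= Rf udag)%E /\ (Rf ud <= Rf udag)%E.
Proof.
move=> c2_ge0 ydag_le yc_ge yd_ge Jc_le J_gap.
have e_bounds : 0 <= `|C ydag - g| <= d by rewrite normr_ge0.
split.
  apply: (@Jfun_le_regularizer uc udag yc ydag 0); last by rewrite adde0.
  rewrite -[0](mul0r (d ^+ 2)); apply: half_sqr_add_le => //.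
  by rewrite mulr0 addr0 sqrtr1 mul1r.
apply: (Jfun_le_regularizer (half_sqr_add_le c2_ge0 e_bounds yd_ge)).
rewrite addeC; apply: le_trans (leeD2l _ Jc_le).
by rewrite -lee_subel_addr.
Qed.

End TikhonovComparison.

Lemma discrepancy_residual_bounds (R : realType) (c1 c2 tau_lo tau_up d rd rc : R) :
  0 < d -> Num.max (Num.sqrt (1 + 2 * c2)) (1 + c1) <= tau_lo ->
  tau_lo * d <= rd <= tau_up * d -> `|rd - rc| <= c1 * d ->
  [/\ Num.sqrt (1 + 2 * c2) * d <= rd, d <= rc, rd <= tau_up * d
    & rc <= (tau_up + c1) * d].
Proof.
rewrite ge_max => d_gt0 /andP[sqrt_le_tau c1_le_tau] /andP[rd_lo rd_up].
rewrite ler_norml => /andP[gap_lo gap_up].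
have := ler_wpM2r (ltW d_gt0) sqrt_le_tau.
have := ler_wpM2r (ltW d_gt0) c1_le_tau.
rewrite !mulrDl mul1r; split; lra.
Qed.

Lemma cvg_at_right0_linear_bound (R : realType) (f : R -> R) (k : R) :
  (forall d, 0 < d -> 0 <= f d <= k * d) -> f @ 0^'+ --> 0.
Proof.
move=> f_bounds.
have kd_cvg : (fun d : R => k * d) @ 0^'+ --> 0.
  apply: cvg_at_right_filter; rewrite -[X in _ --> X](mulr0 k).
  exact: cvgM (cvg_cst k) cvg_id.
apply: (squeeze_cvgr _ (cvg_cst 0) kd_cvg).
near=> d; apply: f_bounds; near: d; exact: nbhs_right_gt.
Unshelve. all: by end_near.
Qed.

Theorem proposition2p1 (R : realType)
  (U W Y G : completeNormedModType R)
  (A : Y -> W -> R) (B : U -> W -> R) (C : Y -> G) (ip : G -> G -> R)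
  (Rf : R -> U -> \bar R)
  (Uh : set U) (Yh : set Y) (Wh : set W)
  (gdag : G) (g : R -> G)
  (uc : R -> R -> U) (yc : R -> R -> Y) (ud : R -> R -> U) (yd : R -> R -> Y)
  (c1 c2 tau_up tau_lo : R) (alpha : R -> R) :
  reflexive_space W -> reflexive_space Y -> inner_product_of_norm ip ->
  bdd_op_to_dual A -> cont_invertible_to_dual A ->
  bdd_op_to_dual B -> bdd_linear C ->
  (forall a, 0 < a -> [/\ proper_fun (Rf a), convex_fun (Rf a) &
                          lower_semicontinuous (Rf a)]) ->
  findim_subspace Uh -> findim_subspace Yh -> findim_subspace Wh ->
  (forall d, 0 < d -> `|gdag - g d| <= d) ->
  (* continuous minimizers (u_alpha^delta, y_alpha^delta) *)
  (forall a d, 0 < a -> 0 < d ->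
     is_minimizer (Jfun C (Rf a) (g d)) (cont_feasible A B) (uc a d) (yc a d)) ->
  (* discrete minimizers (u_{alpha,h}^delta, y_{alpha,h}^delta) *)
  (forall a d, 0 < a -> 0 < d ->
     is_minimizer (Jfun C (Rf a) (g d)) (disc_feasible A B Uh Yh Wh)
       (ud a d) (yd a d)) ->
  0 < c1 -> 0 < c2 -> 0 < tau_up -> 0 < tau_lo ->
  tau_lo < tau_up ->
  Num.max (Num.sqrt (1 + 2 * c2)) (1 + c1) <= tau_lo ->
  (forall d, 0 < d -> 0 < alpha d) ->
  (forall d, 0 < d ->
     tau_lo * d <= `|C (yd (alpha d) d) - g d| <= tau_up * d) ->
  (forall d, 0 < d ->
     `| `|C (yd (alpha d) d) - g d| - `|C (yc (alpha d) d) - g d| | <= c1 * d) ->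
  (forall d, 0 < d ->
     (Jfun C (Rf (alpha d)) (g d) (ud (alpha d) d) (yd (alpha d) d)
      - Jfun C (Rf (alpha d)) (g d) (uc (alpha d) d) (yc (alpha d) d)
      <= (c2 * d ^+ 2)%:E)%E) ->
  forall udag : U,
    (* K udag = gdag, with K = C A^{-1} B *)
    (exists ydag : Y, A ydag = B udag /\ C ydag = gdag) ->
    (forall d, 0 < d ->
       (Rf (alpha d) (uc (alpha d) d) <= Rf (alpha d) udag)%E /\
       (Rf (alpha d) (ud (alpha d) d) <= Rf (alpha d) udag)%E) /\
    (forall d, 0 < d ->
       `|C (yd (alpha d) d) - g d| <= tau_up * d /\
       `|C (yc (alpha d) d) - g d| <= (tau_up + c1) * d) /\
    (fun d => `|C (yd (alpha d) d) - g d|) @ 0^'+ --> 0 /\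
    (fun d => `|C (yc (alpha d) d) - g d|) @ 0^'+ --> 0.
Proof.
move=> _ _ _ _ _ _ _ _ _ _ _ g_close c_min _ _ c2_gt0 _ _ _ tau_lo_ge
  alpha_gt0 discrepancy residual_gap J_gap udag [ydag [A_ydag C_ydag]].
have residual_bounds d (d_gt0 : 0 < d) :=
  discrepancy_residual_bounds d_gt0 tau_lo_ge (discrepancy d d_gt0) (residual_gap d d_gt0).
split=> [d d_gt0|].
  have [yd_lo yc_lo _ _] := residual_bounds d d_gt0.
  have [_ uc_min] := c_min _ _ (alpha_gt0 d d_gt0) d_gt0.
  apply: regularizers_le_of_minimality (ltW c2_gt0) _ yc_lo yd_lo
    (uc_min udag ydag A_ydag) (J_gap d d_gt0).
  by rewrite C_ydag g_close.
split=> [d d_gt0|].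
  by have [_ _ yd_up yc_up] := residual_bounds d d_gt0.
split; [apply: (@cvg_at_right0_linear_bound _ _ tau_up) |
        apply: (@cvg_at_right0_linear_bound _ _ (tau_up + c1))] => d d_gt0;
  by have [_ _ yd_up yc_up] := residual_bounds d d_gt0; rewrite normr_ge0.
Qed.
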